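(* Let $q>1$ and let $\rho$ be a positive $2\pi$-periodic $C^2$ function with $(\ln\rho)''(t)<\sqrt{q}/(1+\sqrt{q})$ for all $t$; let $y(\theta)=\rho(\theta)(\cos\theta,\sin\theta)^T$, and let $\phi$ be a continuous function on $\mathbb{S}^1$. With the notation in the context, suppose there is a sequence of positive numbers $k_n\to\infty$ such that for every $\eta\in\mathbb{S}^1$ and every integer $N\ge0$, $$\sum_{j,l=1}^2\big(f_\eta^{j,l}\big)^N\frac{\phi(\mathcal{T}_{j,l}\eta+\delta_{l,2}\pi)\,\Psi_\eta^{j,l}}{|\det D^2\psi_\eta^{j,l}|^{1/2}}\,e^{\mathrm{i}\pi\frac{(-1)^l(1-(-1)^j)}{4}+\mathrm{i}k_n\psi_\eta^{j,l}}\longrightarrow0\quad(n\to\infty).$$ Let $\eta\in\mathbb{S}^1$ satisfy $\rho'(\theta_\eta+\pi)=0\neq\rho'(\theta_\eta)$. Then $\phi(\mathcal{T}_{1,1}\eta)=\phi(\mathcal{T}_{2,2}\eta+\pi)=0$. Moreover, $\phi(\theta_\eta)$ and $\phi(\theta_\eta+\pi)$ are either both zero or both nonzero.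
   Context: Identify $\mathbb{S}^1$ with $\mathbb{R}/(2\pi\mathbb{Z})$ via $\theta\mapsto(\cos\theta,\sin\theta)^T$; $\theta_\eta$ is the angle of $\eta$, and $x^\perp=(-x_2,x_1)^T$. For $\eta\in\mathbb{S}^1$ and $\xi=(\cos\theta_\xi,\sin\theta_\xi)$: $\psi_\eta(\theta,\theta_\xi)=(\sqrt{q}\eta+\xi)\cdot y(\theta)$, $\Psi_\eta(\theta,\theta_\xi)=-(\sqrt{q}\eta-\xi)\cdot y'(\theta)^\perp$, and $D^2\psi_\eta(\theta,\theta_\xi)=\begin{bmatrix}(\sqrt{q}\eta+\xi)\cdot y''(\theta)&\xi^\perp\cdot y'(\theta)\\ \xi^\perp\cdot y'(\theta)&-\xi\cdot y(\theta)\end{bmatrix}$. For $l\in\{1,2\}$ let $\eta_l=(-1)^{l-1}\eta$, $\theta_q=\arccos(1/\sqrt q)$, $h(\theta)=\frac{\sqrt q\sin\theta}{\sqrt q\cos\theta+1}$; the equation $(\ln\rho)'(\theta)=h(\theta-\theta_{\eta_l})$ has exactly two solutions in $\mathbb{R}/(2\pi\mathbb{Z})$: $\mathcal{T}_{1,l}\eta$ with $\theta-\theta_{\eta_l}\in(\theta_q-\pi,\pi-\theta_q)$ and $\mathcal{T}_{2,l}\eta$ with $\theta-\theta_{\eta_l}\in(\pi-\theta_q,\pi+\theta_q)$ (mod $2\pi$). Set $\{\Psi_\eta^{j,l},\psi_\eta^{j,l},D^2\psi_\eta^{j,l}\}=\{\Psi_\eta,\psi_\eta,D^2\psi_\eta\}(\mathcal{T}_{j,l}\eta,\mathcal{T}_{j,l}\eta+\delta_{l,2}\pi)$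 (these determinants are nonzero) and $f_\eta^{j,l}=\rho(\mathcal{T}_{j,l}\eta)\sin(\mathcal{T}_{j,l}\eta-\theta_\eta)$; $\delta_{l,2}$ is the Kronecker delta and $\phi$ is viewed as a function of the angle. *)

From Stdlib Require Import Reals Ratan ZArith.
From Coquelicot Require Import Coquelicot.
Open Scope R_scope.

Definition dot (a b : R * R) : R := fst a * fst b + snd a * snd b.
Definition perp (x : R * R) : R * R := (- snd x, fst x).
Definition unitv (t : R) : R * R := (cos t, sin t).
Definition vadd (a b : R * R) : R * R := (fst a + fst b, snd a + snd b).
Definition vsub (a b : R * R) : R * R := (fst a - fst b, snd a - snd b).
Definition vscal (c : R) (a : R * R) : R * R := (c * fst a, c * snd a).

Definition ycurve (rho : R -> R) (t : R) : R * R := (rho t * cos t, rho t * sin t).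
Definition ycurve' (rho : R -> R) (t : R) : R * R :=
  (Derive (fun s => rho s * cos s) t, Derive (fun s => rho s * sin s) t).
Definition ycurve'' (rho : R -> R) (t : R) : R * R :=
  (Derive_n (fun s => rho s * cos s) 2 t, Derive_n (fun s => rho s * sin s) 2 t).

(* eta = unitv th_eta, xi = unitv th_xi *)
Definition psi_eta (q : R) (rho : R -> R) (th_eta th th_xi : R) : R :=
  dot (vadd (vscal (sqrt q) (unitv th_eta)) (unitv th_xi)) (ycurve rho th).
Definition Psi_eta (q : R) (rho : R -> R) (th_eta th th_xi : R) : R :=
  - dot (vsub (vscal (sqrt q) (unitv th_eta)) (unitv th_xi)) (perp (ycurve' rho th)).
Definition detD2psi (q : R) (rho : R -> R) (th_eta th th_xi : R) : R :=
  let a := dot (vadd (vscal (sqrt q) (unitv th_eta)) (unitv th_xi)) (ycurve'' rho th) in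
  let b := dot (perp (unitv th_xi)) (ycurve' rho th) in
  let d := - dot (unitv th_xi) (ycurve rho th) in
  a * d - b * b.

Definition theta_q (q : R) : R := acos (1 / sqrt q).
Definition hq (q : R) (t : R) : R := sqrt q * sin t / (sqrt q * cos t + 1).

Definition delta2 (l : nat) : R := if Nat.eqb l 2 then 1 else 0.
(* angle of eta_l = (-1)^(l-1) eta *)
Definition theta_eta_l (l : nat) (th_eta : R) : R := th_eta + delta2 l * PI.

Definition in_mod2pi (x a b : R) : Prop :=
  exists m : Z, a < x - 2 * PI * IZR m < b.

(* T j l th_eta is (an angle representing) T_{j,l} eta, eta = unitv th_eta *)
Definition is_T (q : R) (rho : R -> R) (T : nat -> nat -> R -> R) : Prop :=
  forall (th_eta : R) (l : nat), (l = 1%nat \/ l = 2%nat) ->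
    (Derive (fun s => ln (rho s)) (T 1%nat l th_eta)
       = hq q (T 1%nat l th_eta - theta_eta_l l th_eta) /\
     in_mod2pi (T 1%nat l th_eta - theta_eta_l l th_eta)
       (theta_q q - PI) (PI - theta_q q)) /\
    (Derive (fun s => ln (rho s)) (T 2%nat l th_eta)
       = hq q (T 2%nat l th_eta - theta_eta_l l th_eta) /\
     in_mod2pi (T 2%nat l th_eta - theta_eta_l l th_eta)
       (PI - theta_q q) (PI + theta_q q)).

Definition cexpi (a : R) : C := (cos a, sin a).

Definition summand (q : R) (rho : R -> R) (phi : R -> C) (T : nat -> nat -> R -> R)
    (kn : R) (N j l : nat) (th_eta : R) : C :=
  let t := T j l th_eta in
  let txi := t + delta2 l * PI in
  let f := rho t * sin (t - th_eta) in
  Cmult (Cmult (RtoC (f ^ N * Psi_eta q rho th_eta t txi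
                       / sqrt (Rabs (detD2psi q rho th_eta t txi))))
               (phi txi))
        (cexpi (PI * ((-1) ^ l * (1 - (-1) ^ j)) / 4 + kn * psi_eta q rho th_eta t txi)).

Definition sum4 (q : R) (rho : R -> R) (phi : R -> C) (T : nat -> nat -> R -> R)
    (kn : R) (N : nat) (th_eta : R) : C :=
  Cplus (Cplus (summand q rho phi T kn N 1 1 th_eta) (summand q rho phi T kn N 1 2 th_eta))
        (Cplus (summand q rho phi T kn N 2 1 th_eta) (summand q rho phi T kn N 2 2 th_eta)).

From Stdlib Require Import Reals ZArith Lra Nsatz.
From Coquelicot Require Import Coquelicot.
Open Scope R_scope.

(* Write [L = (ln rho)'] and [h = hq q].  The points [T j l eta] are the zeros of
   [L theta - h (theta - theta_{eta_l})] on the two branches of [h], and on each branch this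
   function is strictly decreasing since the curvature bound gives
   [L' < sqrt q / (1 + sqrt q) <= h'].
   Hence [rho'(theta_eta + PI) = 0] forces [T 1 2 eta = T 2 1 eta = theta_eta + PI] modulo [2 PI],
   so [f^{1,2} = f^{2,1} = 0], while the monotonicity of [f = rho theta * sin (theta - theta_eta)]
   between the two remaining points shows that [f^{1,1}] and [f^{2,2}] are distinct and nonzero when
   [rho' theta_eta <> 0].  For [N >= 1] the sums thus reduce to [(f^{1,1})^N w11 + (f^{2,2})^N w22],
   whose coefficients [w] have moduli independent of [n]; eliminating between [N = 1] and [N = 2]
   kills [w11] and [w22], i.e. [phi] vanishes at [T 1 1 eta] and [T 2 2 eta + PI].  For [N = 0] only
   [w12 + w21] remains, so [|w12| = |w21|], and as the amplitudes [Psi / |det D^2 psi|^(1/2)] do not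
   vanish, [phi theta_eta] and [phi (theta_eta + PI)] vanish together. *)

Lemma periodic_2PI_Z {A : Type} (g : R -> A) :
  (forall t, g (t + 2 * PI) = g t) -> forall (m : Z) t, g (t + 2 * PI * IZR m) = g t.
Proof.
  intros Hg m; induction m as [|m IHm|m IHm] using Z.peano_ind; intro t.
  - now rewrite Rmult_0_r, Rplus_0_r.
  - rewrite succ_IZR, <- (IHm t), <- (Hg (t + 2 * PI * IZR m)). f_equal. ring.
  - rewrite <- (IHm t), <- (Hg (t + 2 * PI * IZR (Z.pred m))).
    unfold Z.pred. rewrite plus_IZR. f_equal. ring.
Qed.

Lemma sin_2PI_Z x m : sin (x + 2 * PI * IZR m) = sin x.
Proof. apply (periodic_2PI_Z sin). intro t. rewrite sin_plus, sin_2PI, cos_2PI. ring. Qed.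

Lemma cos_2PI_Z x m : cos (x + 2 * PI * IZR m) = cos x.
Proof. apply (periodic_2PI_Z cos). intro t. rewrite cos_plus, sin_2PI, cos_2PI. ring. Qed.

Lemma Derive_periodic (g : R -> R) (c : R) :
  (forall t, g (t + c) = g t) -> (forall t, ex_derive g t) ->
  forall x, Derive g (x + c) = Derive g x.
Proof.
  intros Hg Hd x.
  transitivity (Derive (fun s => g (s + c)) x); [|now apply Derive_ext].
  rewrite (Derive_comp g (fun s => s + c)) by (auto; auto_derive; auto).
  replace (Derive (fun s : R => s + c) x) with 1
    by (symmetry; apply is_derive_unique; auto_derive; auto; ring).
  ring.
Qed.

Lemma cos_lt_of_abs_lt a t : a <= PI -> - a < t < a -> cos a < cos t.
Proof.
  intros Ha Ht. destruct (Rle_or_lt 0 t).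
  - apply cos_decreasing_1; lra.
  - rewrite <- (cos_neg t). apply cos_decreasing_1; lra.
Qed.

Lemma lim_le_0 (K : R) (u : nat -> R) : (forall n, K <= u n) -> is_lim_seq u 0 -> K <= 0.
Proof. intros Hu Hlim. exact (is_lim_seq_le (fun _ => K) u K 0 Hu (is_lim_seq_const K) Hlim). Qed.

Lemma power_sum_vanishing (a b cw cv : R) (w v : nat -> C) :
  a <> 0 -> b <> 0 -> a <> b ->
  (forall n, Cmod (w n) = cw) -> (forall n, Cmod (v n) = cv) ->
  (forall N, (0 < N)%nat ->
     is_lim_seq
       (fun n => Cmod (Cplus (Cmult (RtoC (a ^ N)) (w n)) (Cmult (RtoC (b ^ N)) (v n)))) 0) ->
  cw = 0 /\ cv = 0.
Proof.
  intros Ha Hb Hab Hw Hv Hlim.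
  set (S N n := Cplus (Cmult (RtoC (a ^ N)) (w n)) (Cmult (RtoC (b ^ N)) (v n))).
  assert (Hcomb : forall c, is_lim_seq (fun n => Rabs c * Cmod (S 1%nat n) + Cmod (S 2%nat n)) 0).
  { intro c. replace 0 with (Rabs c * 0 + 0) by ring.
    apply is_lim_seq_plus'; [apply (is_lim_seq_scal_l _ (Rabs c) 0)|]; apply Hlim; auto. }
  assert (Hw0 : Rabs (a * (b - a)) * cw <= 0).
  { refine (lim_le_0 _ _ _ (Hcomb b)); intro n.
    rewrite <- (Hw n), <- Cmod_R, <- Cmod_mult.
    replace (Cmult (RtoC (a * (b - a))) (w n))
      with (Cplus (Cmult (RtoC b) (S 1%nat n)) (Copp (S 2%nat n)))
      by (unfold S; apply injective_projections; simpl; ring).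
    eapply Rle_trans; [apply Cmod_triangle|]. rewrite Cmod_opp, Cmod_mult, Cmod_R. lra. }
  assert (Hv0 : Rabs (b * (a - b)) * cv <= 0).
  { refine (lim_le_0 _ _ _ (Hcomb a)); intro n.
    rewrite <- (Hv n), <- Cmod_R, <- Cmod_mult.
    replace (Cmult (RtoC (b * (a - b))) (v n))
      with (Cplus (Cmult (RtoC a) (S 1%nat n)) (Copp (S 2%nat n)))
      by (unfold S; apply injective_projections; simpl; ring).
    eapply Rle_trans; [apply Cmod_triangle|]. rewrite Cmod_opp, Cmod_mult, Cmod_R. lra. }
  assert (0 < Rabs (a * (b - a))) by (apply Rabs_pos_lt, Rmult_integral_contrapositive; split; lra).
  assert (0 < Rabs (b * (a - b))) by (apply Rabs_pos_lt, Rmult_integral_contrapositive; split; lra).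
  pose proof (Cmod_ge_0 (w O)). pose proof (Cmod_ge_0 (v O)). rewrite Hw in *. rewrite Hv in *.
  split; nra.
Qed.

Lemma sum_vanishing_moduli (cw cv : R) (w v : nat -> C) :
  (forall n, Cmod (w n) = cw) -> (forall n, Cmod (v n) = cv) ->
  is_lim_seq (fun n => Cmod (Cplus (w n) (v n))) 0 -> cw = cv.
Proof.
  intros Hw Hv Hlim.
  assert (Habs : Rabs (cw - cv) <= 0).
  { refine (lim_le_0 _ _ _ Hlim); intro n. rewrite <- (Hw n), <- (Hv n).
    pose proof (Cmod_triangle (Cplus (w n) (v n)) (Copp (v n))) as H1.
    pose proof (Cmod_triangle (Cplus (w n) (v n)) (Copp (w n))) as H2.
    rewrite Cmod_opp in H1, H2.
    replace (Cplus (Cplus (w n) (v n)) (Copp (v n))) with (w n) in H1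
      by (apply injective_projections; simpl; ring).
    replace (Cplus (Cplus (w n) (v n)) (Copp (w n))) with (v n) in H2
      by (apply injective_projections; simpl; ring).
    apply Rabs_le. lra. }
  pose proof (Rabs_pos (cw - cv)). apply Rminus_diag_uniq, Rabs_eq_0. lra.
Qed.

Lemma Cmod_cexpi a : Cmod (cexpi a) = 1.
Proof.
  unfold Cmod, cexpi. cbn [fst snd].
  rewrite <- sqrt_1. f_equal. rewrite <- (sin2_cos2 a). unfold Rsqr. ring.
Qed.

Section PolarCurve.
Variable rho : R -> R.
Hypothesis rho_pos : forall t, 0 < rho t.
Hypothesis rho_derivable : forall t, ex_derive rho t.
Hypothesis rho'_derivable : forall t, ex_derive (Derive rho) t.

Ltac fold_rho :=
  change (fun s : R => rho s) with rho; change (fun s : R => Derive rho s) with (Derive rho).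

Lemma Derive_ln_rho x : Derive (fun s => ln (rho s)) x = Derive rho x / rho x.
Proof.
  apply is_derive_unique. auto_derive.
  - repeat split; auto.
  - fold_rho. field. specialize (rho_pos x). lra.
Qed.

Lemma Derive_2_ln_rho x : Derive_n (fun s => ln (rho s)) 2 x =
  (Derive (Derive rho) x * rho x - Derive rho x ^ 2) / rho x ^ 2.
Proof.
  cbn [Derive_n]. rewrite (Derive_ext _ (fun s => Derive rho s / rho s)) by exact Derive_ln_rho.
  apply is_derive_unique. auto_derive.
  - repeat split; auto. specialize (rho_pos x). lra.
  - fold_rho. field. specialize (rho_pos x). lra.
Qed.

Lemma is_derive_Derive_ln_rho x :
  is_derive (Derive (fun s => ln (rho s))) x (Derive_n (fun s => ln (rho s)) 2 x).
Proof.
  apply Derive_correct, (ex_derive_ext (fun s => Derive rho s / rho s)).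
  - intro t. now rewrite Derive_ln_rho.
  - auto_derive. repeat split; auto. specialize (rho_pos x). lra.
Qed.

Lemma Derive_rho_cos x : Derive (fun s => rho s * cos s) x = Derive rho x * cos x - rho x * sin x.
Proof. apply is_derive_unique. auto_derive; auto. fold_rho. ring. Qed.

Lemma Derive_rho_sin x : Derive (fun s => rho s * sin s) x = Derive rho x * sin x + rho x * cos x.
Proof. apply is_derive_unique. auto_derive; auto. fold_rho. ring. Qed.

Lemma Derive_2_rho_cos x : Derive_n (fun s => rho s * cos s) 2 x =
  Derive (Derive rho) x * cos x - 2 * Derive rho x * sin x - rho x * cos x.
Proof.
  cbn [Derive_n]. rewrite (Derive_ext _ _ _ Derive_rho_cos).
  apply is_derive_unique. auto_derive; [repeat split; auto|]. fold_rho. ring.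
Qed.

Lemma Derive_2_rho_sin x : Derive_n (fun s => rho s * sin s) 2 x =
  Derive (Derive rho) x * sin x + 2 * Derive rho x * cos x - rho x * sin x.
Proof.
  cbn [Derive_n]. rewrite (Derive_ext _ _ _ Derive_rho_sin).
  apply is_derive_unique. auto_derive; [repeat split; auto|]. fold_rho. ring.
Qed.

End PolarCurve.

Definition hq_slope (q u : R) : R := sqrt q * (sqrt q + cos u) / (sqrt q * cos u + 1) ^ 2.

Section SqrtQ.
Variable q : R.
Hypothesis q_gt1 : 1 < q.

Lemma sqrt_q_gt1 : 1 < sqrt q.
Proof. rewrite <- sqrt_1. apply sqrt_lt_1; lra. Qed.

Lemma inv_sqrt_q_bounds : 0 < / sqrt q < 1.
Proof.
  pose proof sqrt_q_gt1. split; [apply Rinv_0_lt_compat; lra|].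
  rewrite <- Rinv_1. apply Rinv_lt_contravar; lra.
Qed.

Lemma cos_theta_q : cos (theta_q q) = / sqrt q.
Proof.
  pose proof inv_sqrt_q_bounds. unfold theta_q, Rdiv. rewrite Rmult_1_l. apply cos_acos. lra.
Qed.

Lemma theta_q_bounds : 0 < theta_q q < PI / 2.
Proof.
  pose proof inv_sqrt_q_bounds. pose proof cos_theta_q.
  assert (0 < theta_q q < PI).
  { unfold theta_q, Rdiv. rewrite Rmult_1_l. apply acos_bound_lt. lra. }
  split; [lra|]. apply Rnot_le_lt. intro H'.
  pose proof (cos_le_0 (theta_q q) H' ltac:(lra)). lra.
Qed.

Lemma branch1_pos t : theta_q q - PI < t < PI - theta_q q -> 0 < sqrt q * cos t + 1.
Proof.
  intro Ht. pose proof theta_q_bounds. pose proof sqrt_q_gt1.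
  pose proof (cos_lt_of_abs_lt (PI - theta_q q) t ltac:(lra) ltac:(lra)) as Hc.
  rewrite Rtrigo_facts.cos_pi_minus, cos_theta_q in Hc.
  apply (Rmult_lt_compat_l (sqrt q)) in Hc; [|lra].
  rewrite Ropp_mult_distr_r_reverse, Rinv_r in Hc; lra.
Qed.

Lemma branch2_neg t : PI - theta_q q < t < PI + theta_q q -> sqrt q * cos t + 1 < 0.
Proof.
  intro Ht. pose proof theta_q_bounds. pose proof sqrt_q_gt1.
  pose proof (cos_lt_of_abs_lt (theta_q q) (t - PI) ltac:(lra) ltac:(lra)) as Hc.
  rewrite cos_theta_q, cos_minus, cos_PI, sin_PI in Hc.
  apply (Rmult_lt_compat_l (sqrt q)) in Hc; [|lra].
  rewrite Rinv_r in Hc; nra.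
Qed.

Lemma central_gt1 t : - theta_q q < t < theta_q q -> 1 < sqrt q * cos t.
Proof.
  intro Ht. pose proof theta_q_bounds. pose proof sqrt_q_gt1.
  pose proof (cos_lt_of_abs_lt (theta_q q) t ltac:(lra) ltac:(lra)) as Hc.
  rewrite cos_theta_q in Hc.
  apply (Rmult_lt_compat_l (sqrt q)) in Hc; [|lra].
  rewrite Rinv_r in Hc; lra.
Qed.

Lemma hq_2PI_Z u m : hq q (u + 2 * PI * IZR m) = hq q u.
Proof. unfold hq. now rewrite sin_2PI_Z, cos_2PI_Z. Qed.

Lemma hq_sin0 u : sin u = 0 -> hq q u = 0.
Proof. intro Hs. unfold hq. rewrite Hs. unfold Rdiv. ring. Qed.

Lemma is_derive_hq th0 u : sqrt q * cos (u - th0) + 1 <> 0 ->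
  is_derive (fun th => hq q (th - th0)) u (hq_slope q (u - th0)).
Proof.
  intro HP. unfold hq, hq_slope. auto_derive; [auto|].
  change (u + - th0) with (u - th0).
  pose proof (sin2_cos2 (u - th0)) as Hsc. unfold Rsqr in Hsc.
  replace (sqrt q + cos (u - th0))
    with (sqrt q * (sin (u - th0) * sin (u - th0) + cos (u - th0) * cos (u - th0)) + cos (u - th0))
    by (rewrite Hsc; ring).
  field; auto.
Qed.

Lemma hq_slope_ge u : sqrt q * cos u + 1 <> 0 -> sqrt q / (1 + sqrt q) <= hq_slope q u.
Proof.
  intro HP. pose proof sqrt_q_gt1. pose proof (COS_bound u).
  assert (Hden : 0 < (1 + sqrt q) * (sqrt q * cos u + 1) ^ 2)
    by (apply Rmult_lt_0_compat; [lra | now apply pow2_gt_0]).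
  assert (Hdiff : hq_slope q u - sqrt q / (1 + sqrt q) =
    sqrt q * ((1 - cos u) * (sqrt q * sqrt q * (1 + cos u) + sqrt q - 1)) /
    ((1 + sqrt q) * (sqrt q * cos u + 1) ^ 2)) by (unfold hq_slope; field; lra).
  assert (0 <= hq_slope q u - sqrt q / (1 + sqrt q)); [|lra].
  rewrite Hdiff. apply Rdiv_le_0_compat; [|exact Hden].
  apply Rmult_le_pos; [lra|]. apply Rmult_le_pos; nra.
Qed.

Lemma hq_sin_cos_pos u : 0 < sqrt q * cos u + 1 -> 0 < hq q u * sin u + cos u.
Proof.
  intro HP. pose proof sqrt_q_gt1. pose proof (COS_bound u).
  pose proof (sin2_cos2 u) as Hsc. unfold Rsqr in Hsc.
  replace (hq q u * sin u + cos u) with ((sqrt q + cos u) / (sqrt q * cos u + 1)).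
  - apply Rdiv_lt_0_compat; lra.
  - unfold hq. replace (sqrt q + cos u) with (sqrt q * (sin u * sin u + cos u * cos u) + cos u)
      by (rewrite Hsc; ring).
    field. lra.
Qed.

Lemma hq_antipodal_diff s : - theta_q q < s < theta_q q -> sin s <> 0 ->
  0 < sin s * (hq q (s - PI) - hq q s).
Proof.
  intros Hs Hsin. pose proof sqrt_q_gt1. pose proof (central_gt1 s Hs).
  assert (Hdiff : sin s * (hq q (s - PI) - hq q s) =
    2 * sqrt q * (sin s * sin s) / ((sqrt q * cos s - 1) * (sqrt q * cos s + 1))).
  { unfold hq. rewrite sin_minus, cos_minus, sin_PI, cos_PI. field. split; lra. }
  rewrite Hdiff. apply Rdiv_lt_0_compat.
  - apply Rmult_lt_0_compat; [lra|]. now apply Rsqr_pos_lt.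
  - apply Rmult_lt_0_compat; lra.
Qed.

End SqrtQ.

Lemma rotation_by_sin0 a e T : sin a = 0 ->
  cos a * cos a = 1 /\
  cos (T + a) = cos a * cos T /\ sin (T + a) = cos a * sin T /\
  cos e = cos a * (cos T * cos (T - (e + a)) + sin T * sin (T - (e + a))) /\
  sin e = cos a * (sin T * cos (T - (e + a)) - cos T * sin (T - (e + a))).
Proof.
  intro Ha. pose proof (sin2_cos2 a) as Hsc. unfold Rsqr in Hsc.
  set (t := T - (e + a)).
  assert (He : e = (T - t) - a) by (unfold t; ring).
  rewrite cos_plus, sin_plus, He.
  repeat rewrite ?cos_minus, ?sin_minus. rewrite Ha.
  repeat split; nra.
Qed.

(* Coordinates at a stationary point [T]: [cT, sT] and [ct, st] are the cosine and sine of [T]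
   and of [t = T - theta_{eta_l}], [ce, se] those of [theta_eta] and [cx, sx] those of
   [theta_xi = T + a], where [eps = cos a = +-1]; [r0, r1, r2] are [rho, rho', rho''] at [T], and
   the last hypothesis is the stationarity equation [(ln rho)'(T) = hq t] with denominators
   cleared. *)
Lemma Psi_eta_identity (sq r0 r1 cT sT ct st ce se cx sx eps P : R) :
  eps * eps = 1 -> cT * cT + sT * sT = 1 -> ct * ct + st * st = 1 ->
  cx = eps * cT -> sx = eps * sT ->
  ce = eps * (cT * ct + sT * st) -> se = eps * (sT * ct - cT * st) ->
  P = sq * ct + 1 -> r1 * P = r0 * sq * st ->
  (- ((sq * ce - cx) * (- (r1 * sT + r0 * cT)) + (sq * se - sx) * (r1 * cT - r0 * sT))) * P
  = eps * r0 * (sq * sq - 1).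
Proof. intros. subst cx sx ce se P. nsatz. Qed.

Lemma detD2psi_identity (sq r0 r1 r2 cT sT ct st ce se cx sx eps P : R) :
  eps * eps = 1 -> cT * cT + sT * sT = 1 -> ct * ct + st * st = 1 ->
  cx = eps * cT -> sx = eps * sT ->
  ce = eps * (cT * ct + sT * st) -> se = eps * (sT * ct - cT * st) ->
  P = sq * ct + 1 -> r1 * P = r0 * sq * st ->
  (((sq * ce + cx) * (r2 * cT - 2 * r1 * sT - r0 * cT)
    + (sq * se + sx) * (r2 * sT + 2 * r1 * cT - r0 * sT)) * (- (cx * (r0 * cT) + sx * (r0 * sT)))
   - (- sx * (r1 * cT - r0 * sT) + cx * (r1 * sT + r0 * cT))
     * (- sx * (r1 * cT - r0 * sT) + cx * (r1 * sT + r0 * cT))) * P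
  = - (P * P) * (r2 * r0 - r1 * r1) + r0 * r0 * sq * (sq + ct).
Proof. intros. subst cx sx ce se P. nsatz. Qed.

Section Nondegeneracy.
Variable q : R.
Variable rho : R -> R.
Hypothesis q_gt1 : 1 < q.
Hypothesis rho_pos : forall t, 0 < rho t.
Hypothesis rho_derivable : forall t, ex_derive rho t.
Hypothesis rho'_derivable : forall t, ex_derive (Derive rho) t.
Hypothesis ln_rho_curvature :
  forall t, Derive_n (fun s => ln (rho s)) 2 t < sqrt q / (1 + sqrt q).

Variables a e T : R.
Hypothesis sin_a : sin a = 0.
Hypothesis stationary : Derive (fun s => ln (rho s)) T = hq q (T - (e + a)).
Hypothesis denominator_neq0 : sqrt q * cos (T - (e + a)) + 1 <> 0.

Let t := T - (e + a).
Let P := sqrt q * cos t + 1.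

Lemma stationary_Derive_rho : Derive rho T * P = rho T * sqrt q * sin t.
Proof.
  pose proof (rho_pos T) as HrT. pose proof stationary as H.
  rewrite Derive_ln_rho in H by auto. unfold hq in H. fold t P in H.
  apply (Rmult_eq_reg_r (/ rho T)); [|apply Rinv_neq_0_compat; lra].
  replace (Derive rho T * P * / rho T) with (Derive rho T / rho T * P) by (field; lra).
  rewrite H. field. split; [lra | exact denominator_neq0].
Qed.

Lemma Psi_eta_stationary_eq :
  Psi_eta q rho e T (T + a) * P = cos a * rho T * (sqrt q * sqrt q - 1).
Proof.
  destruct (rotation_by_sin0 a e T sin_a) as (Heps & Hcx & Hsx & Hce & Hse).
  pose proof (sin2_cos2 T) as HT. pose proof (sin2_cos2 t) as Ht. unfold Rsqr in HT, Ht.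
  pose proof (Psi_eta_identity (sqrt q) (rho T) (Derive rho T) (cos T) (sin T) (cos t) (sin t)
    (cos e) (sin e) (cos (T + a)) (sin (T + a)) (cos a) P Heps ltac:(lra) ltac:(lra)
    Hcx Hsx Hce Hse eq_refl stationary_Derive_rho) as Hid.
  unfold Psi_eta, dot, vsub, vscal, perp, unitv, ycurve'. cbn [fst snd].
  now rewrite Derive_rho_cos, Derive_rho_sin, Hid by auto.
Qed.

Lemma detD2psi_stationary_eq :
  detD2psi q rho e T (T + a) * P =
  rho T ^ 2 * P ^ 2 * (hq_slope q t - Derive_n (fun s => ln (rho s)) 2 T).
Proof.
  destruct (rotation_by_sin0 a e T sin_a) as (Heps & Hcx & Hsx & Hce & Hse).
  pose proof (sin2_cos2 T) as HT. pose proof (sin2_cos2 t) as Ht. unfold Rsqr in HT, Ht.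
  pose proof (detD2psi_identity (sqrt q) (rho T) (Derive rho T) (Derive (Derive rho) T)
    (cos T) (sin T) (cos t) (sin t) (cos e) (sin e) (cos (T + a)) (sin (T + a)) (cos a) P
    Heps ltac:(lra) ltac:(lra) Hcx Hsx Hce Hse eq_refl stationary_Derive_rho) as Hid.
  unfold detD2psi, dot, vadd, vscal, perp, unitv, ycurve', ycurve'', ycurve. cbn [fst snd].
  rewrite Derive_rho_cos, Derive_rho_sin, Derive_2_rho_cos, Derive_2_rho_sin, Hid by auto.
  rewrite Derive_2_ln_rho by auto. unfold hq_slope. fold P.
  field. split; [specialize (rho_pos T); lra | exact denominator_neq0].
Qed.

Lemma Psi_eta_stationary_neq0 : Psi_eta q rho e T (T + a) <> 0.
Proof.
  pose proof (sqrt_q_gt1 q q_gt1). pose proof (rho_pos T).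
  destruct (rotation_by_sin0 a e T sin_a) as [Heps _].
  intro HPsi. pose proof Psi_eta_stationary_eq as Heq. rewrite HPsi, Rmult_0_l in Heq.
  assert (cos a * rho T * (sqrt q * sqrt q - 1) <> 0); [|lra].
  repeat apply Rmult_integral_contrapositive_currified; nra.
Qed.

(* The curvature bound gives the Hessian determinant the sign of [P]. *)
Lemma detD2psi_stationary_neq0 : detD2psi q rho e T (T + a) <> 0.
Proof.
  pose proof (hq_slope_ge q q_gt1 t denominator_neq0). specialize (ln_rho_curvature T).
  assert (0 < rho T ^ 2 * P ^ 2).
  { apply Rmult_lt_0_compat; apply pow2_gt_0;
      [specialize (rho_pos T); lra | exact denominator_neq0]. }
  intro Hdet. pose proof detD2psi_stationary_eq as Heq. rewrite Hdet, Rmult_0_l in Heq. nra.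
Qed.

End Nondegeneracy.

(* [T j l eta] is a zero of [stat_gap q rho (theta_eta_l l eta)]. *)
Definition stat_gap (q : R) (rho : R -> R) (th0 th : R) : R :=
  Derive (fun s => ln (rho s)) th - hq q (th - th0).

Definition f_eta (rho : R -> R) (e th : R) : R := rho th * sin (th - e).

Definition amplitude (q : R) (rho : R -> R) (T : nat -> nat -> R -> R) (j l : nat) (e : R) : R :=
  let t := T j l e in
  Psi_eta q rho e t (t + delta2 l * PI) / sqrt (Rabs (detD2psi q rho e t (t + delta2 l * PI))).

Lemma add_delta2_1 t : t + delta2 1 * PI = t.
Proof. unfold delta2. simpl. ring. Qed.

Lemma add_delta2_2 t : t + delta2 2 * PI = t + PI.
Proof. unfold delta2. simpl. ring. Qed.

Lemma f_eta_antipode rho e m : f_eta rho e (e + PI + 2 * PI * IZR m) = 0.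
Proof.
  unfold f_eta. replace (e + PI + 2 * PI * IZR m - e) with (PI + 2 * PI * IZR m) by ring.
  rewrite sin_2PI_Z, sin_PI. ring.
Qed.

Lemma amplitude_mul_Cmod_eq0 q rho T j l e (z : C) :
  amplitude q rho T j l e <> 0 -> Rabs (amplitude q rho T j l e) * Cmod z = 0 -> z = 0.
Proof.
  intros Ha Hz. apply Cmod_eq_0. apply Rmult_integral in Hz as [Hz|Hz]; auto.
  exfalso. now apply Ha, Rabs_eq_0.
Qed.

Lemma summand_pow q rho phi T kn N j l e :
  summand q rho phi T kn N j l e =
  Cmult (RtoC (f_eta rho e (T j l e) ^ N)) (summand q rho phi T kn 0 j l e).
Proof.
  unfold summand, f_eta. cbv zeta.
  apply injective_projections; simpl; unfold Rdiv; ring.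
Qed.

Lemma Cmod_summand_0 q rho phi T kn j l e :
  Cmod (summand q rho phi T kn 0 j l e) =
  Rabs (amplitude q rho T j l e) * Cmod (phi (T j l e + delta2 l * PI)).
Proof.
  unfold summand, amplitude. cbv zeta. rewrite !Cmod_mult, Cmod_cexpi, Cmod_R. simpl.
  rewrite Rmult_1_l. ring.
Qed.

Section StationaryPoints.
Variable q : R.
Variable rho : R -> R.
Hypothesis q_gt1 : 1 < q.
Hypothesis rho_pos : forall t, 0 < rho t.
Hypothesis rho_periodic : forall t, rho (t + 2 * PI) = rho t.
Hypothesis rho_derivable : forall t, ex_derive rho t.
Hypothesis rho'_derivable : forall t, ex_derive (Derive rho) t.
Hypothesis ln_rho_curvature :
  forall t, Derive_n (fun s => ln (rho s)) 2 t < sqrt q / (1 + sqrt q).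

Lemma stat_gap_2PI_Z th0 th m : stat_gap q rho th0 (th + 2 * PI * IZR m) = stat_gap q rho th0 th.
Proof.
  unfold stat_gap. rewrite Derive_periodic.
  - replace (th + 2 * PI * IZR m - th0) with (th - th0 + 2 * PI * IZR m) by ring.
    now rewrite hq_2PI_Z.
  - intro t. now rewrite (periodic_2PI_Z rho rho_periodic).
  - intro t. auto_derive. auto.
Qed.

Lemma f_eta_2PI_Z e th m : f_eta rho e (th + 2 * PI * IZR m) = f_eta rho e th.
Proof.
  unfold f_eta. rewrite (periodic_2PI_Z rho rho_periodic).
  replace (th + 2 * PI * IZR m - e) with (th - e + 2 * PI * IZR m) by ring.
  now rewrite sin_2PI_Z.
Qed.

Lemma stat_gap_decreasing th0 x y : x < y ->
  (forall z, x <= z <= y -> sqrt q * cos (z - th0) + 1 <> 0) ->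
  stat_gap q rho th0 y < stat_gap q rho th0 x.
Proof.
  intros Hxy HP.
  cut (- stat_gap q rho th0 x < - stat_gap q rho th0 y); [lra|].
  apply (incr_function_le (fun z => - stat_gap q rho th0 z) x y
    (fun z => - (Derive_n (fun s => ln (rho s)) 2 z - hq_slope q (z - th0)))); try (simpl; lra).
  - intros z Hxz Hzy. apply (is_derive_opp (stat_gap q rho th0)).
    apply (is_derive_minus (Derive (fun s => ln (rho s))) (fun th => hq q (th - th0))).
    + now apply is_derive_Derive_ln_rho.
    + apply is_derive_hq. apply HP. simpl in *. lra.
  - intros z Hxz Hzy. simpl in Hxz, Hzy.
    pose proof (hq_slope_ge q q_gt1 (z - th0) (HP z (conj Hxz Hzy))).
    specialize (ln_rho_curvature z). lra.
Qed.

Lemma stat_root_representative th0 a b T :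
  in_mod2pi (T - th0) a b -> Derive (fun s => ln (rho s)) T = hq q (T - th0) ->
  exists x, (exists m, T = x + 2 * PI * IZR m) /\ a < x - th0 < b /\ stat_gap q rho th0 x = 0.
Proof.
  intros [m Hm] HT. exists (T - 2 * PI * IZR m). split; [now exists m; ring|]. split; [lra|].
  rewrite <- (stat_gap_2PI_Z th0 _ m).
  replace (T - 2 * PI * IZR m + 2 * PI * IZR m) with T by ring.
  unfold stat_gap. rewrite HT. ring.
Qed.

Lemma stat_root_unique th0 a b x y :
  (forall z, a < z - th0 < b -> sqrt q * cos (z - th0) + 1 <> 0) ->
  a < x - th0 < b -> a < y - th0 < b ->
  stat_gap q rho th0 x = 0 -> stat_gap q rho th0 y = 0 -> x = y.
Proof.
  intros HP Hx Hy Gx Gy.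
  destruct (Rtotal_order x y) as [Hxy|[Hxy|Hxy]]; [exfalso| |exfalso]; auto.
  - pose proof (stat_gap_decreasing th0 x y Hxy ltac:(intros z Hz; apply HP; lra)). lra.
  - pose proof (stat_gap_decreasing th0 y x Hxy ltac:(intros z Hz; apply HP; lra)). lra.
Qed.

Lemma stat_root_mod2pi th0 a b T x :
  (forall z, a < z - th0 < b -> sqrt q * cos (z - th0) + 1 <> 0) ->
  in_mod2pi (T - th0) a b -> Derive (fun s => ln (rho s)) T = hq q (T - th0) ->
  a < x - th0 < b -> stat_gap q rho th0 x = 0 -> exists m, T = x + 2 * PI * IZR m.
Proof.
  intros HP Hin HT Hx Gx.
  destruct (stat_root_representative th0 a b T Hin HT) as (y & [m Hm] & Hy & Gy).
  exists m. rewrite Hm. f_equal. exact (stat_root_unique th0 a b y x HP Hy Hx Gy Gx).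
Qed.

Lemma f_eta_increasing e x y : x < y ->
  (forall z, x <= z <= y ->
     theta_q q - PI < z - e < PI - theta_q q /\ 0 <= stat_gap q rho e z * sin (z - e)) ->
  f_eta rho e x < f_eta rho e y.
Proof.
  intros Hxy Hz.
  apply (incr_function_le (f_eta rho e) x y
    (fun z => rho z * (Derive (fun s => ln (rho s)) z * sin (z - e) + cos (z - e))));
    try (simpl; lra).
  - intros z _ _. unfold f_eta. rewrite Derive_ln_rho by auto. auto_derive; [auto|].
    change (fun s : R => rho s) with rho. change (z + - e) with (z - e).
    field. specialize (rho_pos z). lra.
  - intros z Hxz Hzy. simpl in Hxz, Hzy. destruct (Hz z (conj Hxz Hzy)) as [Hb Hg].
    pose proof (hq_sin_cos_pos q q_gt1 (z - e) (branch1_pos q q_gt1 _ Hb)).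
    unfold stat_gap in Hg. apply Rmult_lt_0_compat; [auto | nra].
Qed.

Section SeparatedValues.
(* [x1] and [x2] represent [T 1 1 e] and [T 2 2 e - 2 PI]. *)
Variables e x1 x2 : R.
Hypothesis x1_branch : theta_q q - PI < x1 - e < PI - theta_q q.
Hypothesis x1_root : stat_gap q rho e x1 = 0.
Hypothesis x2_central : - theta_q q < x2 - e < theta_q q.
Hypothesis x2_root : stat_gap q rho (e + PI) x2 = 0.

Let L := Derive (fun s => ln (rho s)).

Lemma branch1_stat_gap_pos z : theta_q q - PI < z - e -> z < x1 -> 0 < stat_gap q rho e z.
Proof.
  intros Hz Hzx. rewrite <- x1_root. apply stat_gap_decreasing; auto.
  intros w Hw. apply Rgt_not_eq, branch1_pos; lra.
Qed.

Lemma branch1_stat_gap_neg z : z - e < PI - theta_q q -> x1 < z -> stat_gap q rho e z < 0.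
Proof.
  intros Hz Hzx. rewrite <- x1_root. apply stat_gap_decreasing; auto.
  intros w Hw. apply Rgt_not_eq, branch1_pos; lra.
Qed.

Lemma stat_gap_x2 : stat_gap q rho e x2 = hq q (x2 - e - PI) - hq q (x2 - e).
Proof.
  unfold stat_gap in *. replace (x2 - e - PI) with (x2 - (e + PI)) by ring. lra.
Qed.

Lemma central_stat_gap_decreasing x y : x < y ->
  - theta_q q < x - e -> y - e < theta_q q ->
  stat_gap q rho (e + PI) y < stat_gap q rho (e + PI) x.
Proof.
  intros Hxy Hx Hy. apply stat_gap_decreasing; auto. intros z Hz.
  pose proof (central_gt1 q q_gt1 (z - e) ltac:(lra)).
  replace (z - (e + PI)) with (z - e - PI) by ring.
  rewrite cos_minus, cos_PI, sin_PI. nra.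
Qed.

Lemma stat_gap_antipode_at_e : stat_gap q rho (e + PI) e = L e.
Proof.
  unfold stat_gap. rewrite hq_sin0; [unfold L; ring|].
  replace (e - (e + PI)) with (- PI) by ring. now rewrite sin_neg, sin_PI, Ropp_0.
Qed.

Lemma x2_gt_e : 0 < L e -> e < x2.
Proof.
  intro HL. pose proof stat_gap_antipode_at_e as He.
  destruct (Rtotal_order e x2) as [H|[H|H]]; auto; exfalso.
  - subst x2. lra.
  - pose proof (central_stat_gap_decreasing x2 e H ltac:(lra) ltac:(lra)). lra.
Qed.

Lemma x2_lt_e : L e < 0 -> x2 < e.
Proof.
  intro HL. pose proof stat_gap_antipode_at_e as He.
  destruct (Rtotal_order x2 e) as [H|[H|H]]; auto; exfalso.
  - subst x2. lra.
  - pose proof (central_stat_gap_decreasing e x2 H ltac:(lra) ltac:(lra)). lra.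
Qed.

Lemma f_eta_separated_pos : 0 < L e -> 0 < f_eta rho e x2 < f_eta rho e x1.
Proof.
  intro HL. pose proof (theta_q_bounds q q_gt1) as Hth.
  pose proof (x2_gt_e HL) as Hx2.
  assert (Hsin : 0 < sin (x2 - e)) by (apply sin_gt_0; lra).
  assert (Hgap : 0 < stat_gap q rho e x2).
  { pose proof (hq_antipodal_diff q q_gt1 (x2 - e) x2_central ltac:(lra)).
    rewrite stat_gap_x2. nra. }
  assert (Hx12 : x2 < x1).
  { destruct (Rtotal_order x2 x1) as [H|[H|H]]; auto; exfalso.
    - subst x2. lra.
    - pose proof (branch1_stat_gap_neg x2 ltac:(lra) H). lra. }
  split.
  - unfold f_eta. apply Rmult_lt_0_compat; auto.
  - apply f_eta_increasing; auto. intros z Hz. split; [lra|].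
    assert (0 < sin (z - e)) by (apply sin_gt_0; lra).
    destruct (Req_dec z x1) as [->|Hzx]; [rewrite x1_root; lra|].
    pose proof (branch1_stat_gap_pos z ltac:(lra) ltac:(lra)). nra.
Qed.

Lemma f_eta_separated_neg : L e < 0 -> f_eta rho e x1 < f_eta rho e x2 < 0.
Proof.
  intro HL. pose proof (theta_q_bounds q q_gt1) as Hth.
  pose proof (x2_lt_e HL) as Hx2.
  assert (Hsin : sin (x2 - e) < 0) by (apply sin_lt_0_var; lra).
  assert (Hgap : stat_gap q rho e x2 < 0).
  { pose proof (hq_antipodal_diff q q_gt1 (x2 - e) x2_central ltac:(lra)).
    rewrite stat_gap_x2. nra. }
  assert (Hx12 : x1 < x2).
  { destruct (Rtotal_order x1 x2) as [H|[H|H]]; auto; exfalso.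
    - subst x2. lra.
    - pose proof (branch1_stat_gap_pos x2 ltac:(lra) H). lra. }
  split.
  - apply f_eta_increasing; auto. intros z Hz. split; [lra|].
    assert (sin (z - e) < 0) by (apply sin_lt_0_var; lra).
    destruct (Req_dec z x1) as [->|Hzx]; [rewrite x1_root; lra|].
    pose proof (branch1_stat_gap_neg z ltac:(lra) ltac:(lra)). nra.
  - unfold f_eta. specialize (rho_pos x2). nra.
Qed.

End SeparatedValues.

Variable T : nat -> nat -> R -> R.
Hypothesis T_spec : is_T q rho T.

Lemma is_T_stationary e j l :
  (j = 1 \/ j = 2)%nat -> (l = 1 \/ l = 2)%nat ->
  Derive (fun s => ln (rho s)) (T j l e) = hq q (T j l e - theta_eta_l l e) /\
  sqrt q * cos (T j l e - theta_eta_l l e) + 1 <> 0.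
Proof.
  intros Hj Hl. destruct (T_spec e l Hl) as [[H1 [m1 Hin1]] [H2 [m2 Hin2]]].
  destruct Hj as [-> | ->]; split; auto.
  - rewrite <- (cos_2PI_Z _ (- m1)), opp_IZR.
    apply Rgt_not_eq, branch1_pos; auto. lra.
  - rewrite <- (cos_2PI_Z _ (- m2)), opp_IZR.
    apply Rlt_not_eq, branch2_neg; auto. lra.
Qed.

Lemma is_T_amplitude_neq0 e j l :
  (j = 1 \/ j = 2)%nat -> (l = 1 \/ l = 2)%nat -> amplitude q rho T j l e <> 0.
Proof.
  intros Hj Hl. destruct (is_T_stationary e j l Hj Hl) as [Hstat Hden].
  assert (Hsin : sin (delta2 l * PI) = 0).
  { unfold delta2. destruct (Nat.eqb l 2).
    - now rewrite Rmult_1_l, sin_PI.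
    - now rewrite Rmult_0_l, sin_0. }
  pose proof (Psi_eta_stationary_neq0 q rho q_gt1 rho_pos rho_derivable _ _ _ Hsin Hstat Hden).
  pose proof (detD2psi_stationary_neq0 q rho q_gt1 rho_pos rho_derivable rho'_derivable
    ln_rho_curvature _ _ _ Hsin Hstat Hden) as Hdet.
  unfold amplitude. cbv zeta. apply Rmult_integral_contrapositive. split; auto.
  apply Rinv_neq_0_compat, Rgt_not_eq, sqrt_lt_R0, Rabs_pos_lt, Hdet.
Qed.

Variable e : R.
Hypothesis rho'_antipode : Derive rho (e + PI) = 0.
Hypothesis rho'_e : Derive rho e <> 0.

Lemma stat_gap_antipode th0 : sin (e + PI - th0) = 0 -> stat_gap q rho th0 (e + PI) = 0.
Proof.
  intro Hs. unfold stat_gap. rewrite Derive_ln_rho, rho'_antipode, hq_sin0 by auto.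
  unfold Rdiv. ring.
Qed.

Lemma is_T_12_antipodal : exists m, T 1%nat 2%nat e = e + PI + 2 * PI * IZR m.
Proof.
  pose proof (theta_q_bounds q q_gt1).
  destruct (T_spec e 2%nat (or_intror eq_refl)) as [[HT Hin] _].
  unfold theta_eta_l in HT, Hin. rewrite add_delta2_2 in HT, Hin.
  apply (stat_root_mod2pi (e + PI) (theta_q q - PI) (PI - theta_q q)); auto.
  - intros z Hz. pose proof (branch1_pos q q_gt1 _ Hz). lra.
  - lra.
  - apply stat_gap_antipode. replace (e + PI - (e + PI)) with 0 by ring. apply sin_0.
Qed.

Lemma is_T_21_antipodal : exists m, T 2%nat 1%nat e = e + PI + 2 * PI * IZR m.
Proof.
  pose proof (theta_q_bounds q q_gt1).
  destruct (T_spec e 1%nat (or_introl eq_refl)) as [_ [HT Hin]].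
  unfold theta_eta_l in HT, Hin. rewrite add_delta2_1 in HT, Hin.
  apply (stat_root_mod2pi e (PI - theta_q q) (PI + theta_q q)); auto.
  - intros z Hz. pose proof (branch2_neg q q_gt1 _ Hz). lra.
  - lra.
  - apply stat_gap_antipode. replace (e + PI - e) with PI by ring. apply sin_PI.
Qed.

Lemma is_T_f_eta_separated :
  f_eta rho e (T 1%nat 1%nat e) <> f_eta rho e (T 2%nat 2%nat e) /\
  f_eta rho e (T 1%nat 1%nat e) <> 0 /\ f_eta rho e (T 2%nat 2%nat e) <> 0.
Proof.
  pose proof (theta_q_bounds q q_gt1) as Hth.
  destruct (T_spec e 1%nat (or_introl eq_refl)) as [[H11 Hin11] _].
  destruct (T_spec e 2%nat (or_intror eq_refl)) as [_ [H22 Hin22]].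
  unfold theta_eta_l in *. rewrite add_delta2_1 in H11, Hin11. rewrite add_delta2_2 in H22, Hin22.
  destruct (stat_root_representative e _ _ _ Hin11 H11) as (x1 & [m1 Hm1] & Hx1 & G1).
  destruct (stat_root_representative (e + PI) _ _ _ Hin22 H22) as (y & [m2 Hm2] & Hy & G2).
  rewrite Hm1, Hm2, !f_eta_2PI_Z.
  replace y with (y - 2 * PI + 2 * PI * IZR 1) in G2 |- * by ring.
  rewrite f_eta_2PI_Z. rewrite stat_gap_2PI_Z in G2.
  assert (HL : Derive (fun s => ln (rho s)) e <> 0).
  { rewrite Derive_ln_rho by auto. specialize (rho_pos e). pose proof rho'_e.
    unfold Rdiv. apply Rmult_integral_contrapositive_currified; [auto|].
    apply Rinv_neq_0_compat; lra. }
  destruct (Rdichotomy _ _ HL) as [Hneg|Hpos].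
  - pose proof (f_eta_separated_neg e x1 (y - 2 * PI) Hx1 G1 ltac:(lra) G2 Hneg). lra.
  - pose proof (f_eta_separated_pos e x1 (y - 2 * PI) Hx1 G1 ltac:(lra) G2 Hpos). lra.
Qed.

Variables (phi : R -> C) (k : nat -> R).
Hypothesis phi_periodic : forall t, phi (t + 2 * PI) = phi t.
Hypothesis sum4_vanishing : forall N, is_lim_seq (fun n => Cmod (sum4 q rho phi T (k n) N e)) 0.

Let w j l n := summand q rho phi T (k n) 0 j l e.

Lemma sum4_two_terms N n : (0 < N)%nat ->
  sum4 q rho phi T (k n) N e =
  Cplus (Cmult (RtoC (f_eta rho e (T 1%nat 1%nat e) ^ N)) (w 1 1 n))
        (Cmult (RtoC (f_eta rho e (T 2%nat 2%nat e) ^ N)) (w 2 2 n)).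
Proof.
  intro HN. destruct is_T_12_antipodal as [m12 H12]. destruct is_T_21_antipodal as [m21 H21].
  unfold sum4. rewrite !(summand_pow _ _ _ _ _ N), H12, H21, !f_eta_antipode, pow_i by auto.
  unfold w. generalize (summand q rho phi T (k n) 0).
  intro s. apply injective_projections; simpl; ring.
Qed.

Lemma Cmod_w j l n :
  Cmod (w j l n) = Rabs (amplitude q rho T j l e) * Cmod (phi (T j l e + delta2 l * PI)).
Proof. apply Cmod_summand_0. Qed.

Lemma phi_T11_T22_zero : phi (T 1%nat 1%nat e) = 0 /\ phi (T 2%nat 2%nat e + PI) = 0.
Proof.
  destruct is_T_f_eta_separated as (Hab & Ha & Hb).
  destruct (power_sum_vanishing _ _ _ _ (w 1 1) (w 2 2) Ha Hb Hab (Cmod_w 1 1) (Cmod_w 2 2))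
    as [H11 H22].
  - intros N HN. apply (is_lim_seq_ext (fun n => Cmod (sum4 q rho phi T (k n) N e))).
    + intro n. now rewrite sum4_two_terms.
    + apply sum4_vanishing.
  - rewrite add_delta2_1 in H11. rewrite add_delta2_2 in H22.
    split; eapply amplitude_mul_Cmod_eq0; eauto; apply is_T_amplitude_neq0; auto.
Qed.

Lemma phi_antipodal_zero_iff : phi e = 0 <-> phi (e + PI) = 0.
Proof.
  destruct phi_T11_T22_zero as [H11 H22].
  destruct is_T_12_antipodal as [m12 H12]. destruct is_T_21_antipodal as [m21 H21].
  assert (Hw0 : forall n, w 1 1 n = 0 /\ w 2 2 n = 0).
  { intro n. split; apply Cmod_eq_0; rewrite Cmod_w.
    - now rewrite add_delta2_1, H11, Cmod_0, Rmult_0_r.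
    - now rewrite add_delta2_2, H22, Cmod_0, Rmult_0_r. }
  assert (Hmod := sum_vanishing_moduli _ _ (w 1 2) (w 2 1) (Cmod_w 1 2) (Cmod_w 2 1)).
  assert (Hphi12 : phi (T 1%nat 2%nat e + PI) = phi e).
  { rewrite H12. replace (e + PI + 2 * PI * IZR m12 + PI) with (e + 2 * PI * IZR (m12 + 1))
      by (rewrite plus_IZR; ring).
    apply (periodic_2PI_Z phi phi_periodic). }
  assert (Hphi21 : phi (T 2%nat 1%nat e) = phi (e + PI)).
  { rewrite H21. apply (periodic_2PI_Z phi phi_periodic). }
  rewrite add_delta2_1, add_delta2_2, Hphi12, Hphi21 in Hmod.
  assert (Hlim : is_lim_seq (fun n => Cmod (Cplus (w 1 2 n) (w 2 1 n))) 0).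
  { apply (is_lim_seq_ext (fun n => Cmod (sum4 q rho phi T (k n) 0 e))); [|apply sum4_vanishing].
    intro n. destruct (Hw0 n) as [H1 H2]. unfold sum4. fold (w 1 1 n) (w 1 2 n) (w 2 1 n) (w 2 2 n).
    rewrite H1, H2. f_equal. apply injective_projections; simpl; ring. }
  specialize (Hmod Hlim).
  pose proof (is_T_amplitude_neq0 e 1 2 ltac:(auto) ltac:(auto)).
  pose proof (is_T_amplitude_neq0 e 2 1 ltac:(auto) ltac:(auto)).
  split; intro Hz.
  - apply (amplitude_mul_Cmod_eq0 q rho T 2 1 e); auto. rewrite <- Hmod, Hz, Cmod_0. ring.
  - apply (amplitude_mul_Cmod_eq0 q rho T 1 2 e); auto. rewrite Hmod, Hz, Cmod_0. ring.
Qed.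

End StationaryPoints.

Theorem corollary3 (q : R) (rho : R -> R) (phi : R -> C) (T : nat -> nat -> R -> R)
    (k : nat -> R) (th_eta : R) :
  1 < q ->
  (forall t, 0 < rho t) ->
  (forall t, rho (t + 2 * PI) = rho t) ->
  (forall t, ex_derive rho t) ->
  (forall t, ex_derive (Derive rho) t) ->
  (forall t, continuous (Derive_n rho 2) t) ->
  (forall t, Derive_n (fun s => ln (rho s)) 2 t < sqrt q / (1 + sqrt q)) ->
  (forall t, phi (t + 2 * PI) = phi t) ->
  (forall t, continuous phi t) ->
  is_T q rho T ->
  (forall n, 0 < k n) ->
  is_lim_seq k p_infty ->
  (forall (th : R) (N : nat),
      is_lim_seq (fun n => Cmod (sum4 q rho phi T (k n) N th)) 0) ->
  Derive rho (th_eta + PI) = 0 ->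
  Derive rho th_eta <> 0 ->
  phi (T 1%nat 1%nat th_eta) = 0 /\ phi (T 2%nat 2%nat th_eta + PI) = 0 /\
  (phi th_eta = 0 <-> phi (th_eta + PI) = 0).
Proof.
  intros Hq Hpos Hper Hd1 Hd2 _ Hcurv Hphi _ HT _ _ Hlim Hantipode Heta.
  split; [|split].
  - eapply phi_T11_T22_zero; eauto.
  - eapply phi_T11_T22_zero; eauto.
  - eapply phi_antipodal_zero_iff; eauto.
Qed.
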